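(* Let $K$ be a finite field, $G$ a finite group, $\ell\ge 1$ an integer, $n=\ell|G|$, and let $\mathcal{C}\subseteq K^n$ be a $K$-linear code. Then $\mathcal{C}$ is a quasi-$G$ code of index $\ell$ if and only if $G$ is isomorphic to a subgroup $H$ of $\mathrm{PAut}(\mathcal{C})$ which acts freely on the coordinate set $\{1,\ldots,n\}$ with exactly $\ell$ orbits (i.e. of index $\ell$).
   Context: For a finite group $G$ with a fixed ordering $g_1,\ldots,g_m$ of its elements ($m=|G|$), the group algebra $KG$ is identified with $K^m$ via the $K$-linear isomorphism $\varphi:\sum_i a_ig_i\mapsto(a_1,\ldots,a_m)$; then $KG^\ell=KG\oplus\cdots\oplus KG$ ($\ell$ copies) is identified with $K^{m\ell}$ via $\varphi^\ell$. A $K$-linear code $\mathcal{C}\subseteq K^{n}$, $n=\ell|G|$, is called a quasi-$G$ code of index $\ell$ if, for some bijection between the coordinate set $\{1,\ldots,n\}$ and $\{1,\ldots,\ell\}\times G$ (equivalently, for some such identification $K^n\cong KG^\ell$), $\mathcal{C}$ corresponds to a right $KG$-submodule of $KG^\ell$. The symmetric group $S_n$ acts on $K^n$ by $v^\sigma=(v_{\sigma^{-1}(1)},\ldots,v_{\sigma^{-1}(n)})$, and $\mathrm{PAut}(\mathcal{C})=\{\sigma\in S_n : \mathcal{C}^\sigma=\mathcal{C}\}$ is the permutation automorphism group of $\mathcal{C}$. An action is free if no non-identity element fixes any point; for a free action of a finite group $H$ on an $n$-element set, all orbits have size $|H|$ and the index is $n/|H|$. *)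

From HB Require Import structures.
From mathcomp Require Import all_boot all_order all_algebra all_fingroup.
Set Implicit Arguments. Unset Strict Implicit. Unset Printing Implicit Defensive.
Import GRing.Theory.
Local Open Scope ring_scope.

(* Elements of KG^l are represented by their coefficient functions
   (i, g) |-> coefficient of g in the i-th component. *)

(* Right multiplication of u in KG^l by alpha = \sum_h alpha_h h in KG:
   (u * alpha)_(i, g) = \sum_h u_(i, g h^-1) alpha_h. *)
Definition rmulKG (K : fieldType) (gT : finGroupType) (l : nat)
  (u : {ffun 'I_l * gT -> K}) (alpha : {ffun gT -> K}) : {ffun 'I_l * gT -> K} :=
  [ffun p => \sum_(h : gT) u (p.1, (p.2 * h^-1)%g) * alpha h].

Definition right_KG_submodule (K : fieldType) (gT : finGroupType) (l : nat)
  (M : {ffun 'I_l * gT -> K} -> Prop) : Prop :=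
  [/\ M 0,
      (forall u v, M u -> M v -> M (u + v)) &
      (forall u alpha, M u -> M (rmulKG u alpha))].

Definition toKGl (K : fieldType) (gT : finGroupType) (l n : nat)
  (f : 'I_l * gT -> 'I_n) (v : 'rV[K]_n) : {ffun 'I_l * gT -> K} :=
  [ffun p => v 0 (f p)].

Definition quasi_G_code (K : fieldType) (gT : finGroupType) (l n : nat)
  (C : {vspace 'rV[K]_n}) : Prop :=
  exists f : 'I_l * gT -> 'I_n, bijective f /\
    right_KG_submodule (fun u => exists2 v, v \in C & u = toKGl f v).

Definition permv (K : fieldType) (n : nat) (s : {perm 'I_n}) (v : 'rV[K]_n)
  : 'rV[K]_n := \row_j v 0 (s^-1 j)%g.

Definition PAut (K : finFieldType) (n : nat) (C : {vspace 'rV[K]_n})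
  : {set {perm 'I_n}} :=
  [set s : {perm 'I_n} |
     [set permv s v | v in [set v : 'rV[K]_n | v \in C]]
       == [set v : 'rV[K]_n | v \in C]].

Definition free_action (n : nat) (H : {set {perm 'I_n}}) : Prop :=
  forall s, s \in H -> forall x : 'I_n, s x = x -> s = 1%g.

Definition num_orbits (n : nat) (H : {set {perm 'I_n}}) : nat :=
  #|[set orbit 'P H x | x : 'I_n]|.

From mathcomp Require Import all_boot all_order all_algebra all_fingroup.

(* If the coordinates are indexed by {1..l} x G, right multiplication by a
   group element h of KG is the coordinate permutation (i, y) |-> (i, y h), and
   a general element of KG acts by linear combinations of these.  So the image
   of C is a KG-submodule iff C is stable under the l-fold right regular
   representation of G, which is a free action with l orbits.  Conversely, a
   free action of a copy of G with l orbits identifies {1..n} with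
   {orbit representatives} x G equivariantly. *)

Set Implicit Arguments.
Unset Strict Implicit.
Unset Printing Implicit Defensive.
Import GRing.Theory.

Lemma permvK (K : fieldType) n (s : {perm 'I_n}) :
  cancel (@permv K n s) (permv s^-1).
Proof. by move=> v; apply/rowP => j; rewrite !mxE invgK permK. Qed.

Lemma PAutP (K : finFieldType) n (C : {vspace 'rV[K]_n}) (s : {perm 'I_n}) :
  s \in PAut C <-> (forall v, v \in C -> permv s v \in C).
Proof.
rewrite inE eqEcard card_imset ?leqnn ?andbT; last exact: can_inj (permvK s).
split=> [sCC v vC | sCC].
  have := subsetP sCC (permv s v); rewrite inE => -> //.
  by apply: imset_f; rewrite inE.
apply/subsetP => w /imsetP [v]; rewrite inE => vC ->.
by rewrite inE sCC.
Qed.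

Section EquivariantCoordinates.
Variables (K : finFieldType) (gT : finGroupType) (l n : nat).
Variables (f : 'I_l * gT -> 'I_n) (s : gT -> {perm 'I_n}).
Hypothesis f_equiv : forall i y h, f (i, (y * h)%g) = s h (f (i, y)).

Lemma rmulKG_toKGl (v : 'rV[K]_n) alpha :
  rmulKG (toKGl f v) alpha = toKGl f (\sum_h alpha h *: permv (s h) v)%R.
Proof.
apply/ffunP => -[i x]; rewrite !ffunE summxE /=; apply: eq_bigr => h _.
by rewrite !ffunE !mxE -{2}(mulgVK h x) (f_equiv i (x * h^-1)) permK mulrC.
Qed.

Hypothesis f_bij : bijective f.

Lemma toKGl_inj : injective (@toKGl K gT l n f).
Proof.
case: f_bij => fi _ fiK u v /ffunP uv; apply/rowP => j.
by have := uv (fi j); rewrite !ffunE fiK.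
Qed.

Lemma right_KG_submoduleE (C : {vspace 'rV[K]_n}) :
  right_KG_submodule (fun u => exists2 v, v \in C & u = toKGl f v) <->
  (forall h, s h \in PAut C).
Proof.
split=> [[_ _ mulC] h | sC].
  apply/PAutP => v vC.
  have [w wC] := mulC _ [ffun g => (g == h)%:R]%R (ex_intro2 _ _ v vC erefl).
  rewrite rmulKG_toKGl (bigD1 h) //= ffunE eqxx scale1r big1 ?addr0.
    by move=> /toKGl_inj ->.
  by move=> g /negbTE gh; rewrite ffunE gh scale0r.
split.
- by exists 0%R; [exact: mem0v | apply/ffunP => p; rewrite !ffunE mxE].
- move=> _ _ [u uC ->] [v vC ->]; exists (u + v)%R; first exact: memvD.
  by apply/ffunP => p; rewrite !ffunE mxE.
- move=> _ alpha [v vC ->]; rewrite rmulKG_toKGl; eexists; last by [].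
  by apply: memv_suml => h _; apply/memvZ/(PAutP C (s h)).1.
Qed.

End EquivariantCoordinates.

Section RightTranslation.
Local Open Scope group_scope.
Variables (gT : finGroupType) (l n : nat) (f : 'I_l * gT -> 'I_n).
Variable fi : 'I_n -> 'I_l * gT.
Hypotheses (fK : cancel f fi) (fiK : cancel fi f).

Definition rtrans_fun (h : gT) (x : 'I_n) : 'I_n := f ((fi x).1, (fi x).2 * h).

Lemma rtrans_fun_inj h : injective (rtrans_fun h).
Proof.
move=> x y /(can_inj fK) [] e1 /mulIg e2; apply: (can_inj fiK).
by move: e1 e2; case: (fi x); case: (fi y) => /= ? ? ? ? -> ->.
Qed.

Definition rtrans (h : gT) : {perm 'I_n} := perm (@rtrans_fun_inj h).

Lemma rtransE i y h : f (i, y * h) = rtrans h (f (i, y)).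
Proof. by rewrite permE /rtrans_fun fK. Qed.

Lemma rtransM : {in [set: gT] &, {morph rtrans : g h / g * h}}.
Proof.
move=> g h _ _; apply/permP => x; rewrite permM -(fiK x).
by case: (fi x) => i y; rewrite -!rtransE mulgA.
Qed.

Canonical rtrans_morphism := Morphism rtransM.

Lemma injm_rtrans (i0 : 'I_l) : 'injm rtrans_morphism.
Proof.
apply/injmP => g h _ _ /= /permP /(_ (f (i0, 1))).
by rewrite -!rtransE !mul1g => /(can_inj fK) [].
Qed.

Let H := rtrans_morphism @* [set: gT].

Lemma rtrans_free : free_action H.
Proof.
move=> _ /morphimP [h _ _ ->] x; rewrite -(fiK x); case: (fi x) => i y.
rewrite -rtransE => /(can_inj fK) [] /(congr1 (mulg y^-1)); rewrite mulKg mulVg.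
move=> ->; apply/permP => z; rewrite perm1 -(fiK z).
by case: (fi z) => ? ?; rewrite -rtransE mulg1.
Qed.

Lemma orbit_rtrans i y : orbit 'P H (f (i, y)) = [set f (i, z) | z : gT].
Proof.
apply/setP => w; apply/orbitP/imsetP => [[_ /morphimP [h _ _ ->] <-] | [z _ ->]].
  by rewrite /= ?apermE -rtransE; exists (y * h).
by exists (rtrans (y^-1 * z)); rewrite ?mem_morphim ?inE // /= ?apermE -rtransE mulKVg.
Qed.

Lemma num_orbits_rtrans : num_orbits H = l.
Proof.
rewrite /num_orbits.
have -> : [set orbit 'P H x | x : 'I_n] = [set [set f (i, z) | z : gT] | i : 'I_l].
  apply/setP => S; apply/imsetP/imsetP => [[x _ ->] | [i _ ->]].
    by exists (fi x).1; rewrite // -(fiK x); case: (fi x) => i y; rewrite orbit_rtrans fK.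
  by exists (f (i, 1)); rewrite ?orbit_rtrans.
rewrite card_imset ?card_ord // => i j eij.
have : f (i, 1) \in [set f (j, z) | z : gT] by rewrite -eij imset_f.
by case/imsetP => z _ /(can_inj fK) [].
Qed.

End RightTranslation.

Section FreeAction.
Local Open Scope group_scope.
Variables (n : nat) (H : {group {perm 'I_n}}).

Lemma free_action_eq (s t : {perm 'I_n}) x :
  free_action H -> s \in H -> t \in H -> s x = t x -> s = t.
Proof.
move=> freeH sH tH stx; apply/eqP; rewrite eq_mulgV1; apply/eqP.
by apply: (freeH _ _ x); rewrite ?groupM ?groupV // permM stx permK.
Qed.

Lemma orbit_reps l : num_orbits H = l ->
  exists r : 'I_l -> 'I_n, injective (fun i => orbit 'P H (r i)).
Proof.
move=> nH; pose S i := enum_val (cast_ord (esym nH) i).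
have [r Sr] : exists r : 'I_l -> 'I_n, forall i, S i = orbit 'P H (r i).
  apply: (@fin_all_exists _ (fun _ => 'I_n) (fun i x => S i = orbit 'P H x)) => i.
  by case/imsetP: (enum_valP (cast_ord (esym nH) i)) => x _ Sx; exists x.
by exists r => i j; rewrite -!Sr => /enum_val_inj /cast_ord_inj.
Qed.

(* Coordinates (i, y) |-> phi y (r i), with r a transversal of the orbits. *)
Lemma free_action_coordinates (gT : finGroupType) l
    (phi : {morphism [set: gT] >-> {perm 'I_n}}) :
    'injm phi -> phi @* [set: gT] = H -> free_action H ->
    num_orbits H = l -> n = (l * #|gT|)%N ->
  exists f : 'I_l * gT -> 'I_n,
    bijective f /\ forall i y h, f (i, y * h) = phi h (f (i, y)).
Proof.
move=> injphi imphi freeH nH hn; have [r r_inj] := orbit_reps nH.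
have phiH g : phi g \in H by rewrite -imphi mem_morphim ?inE.
pose f (p : 'I_l * gT) := phi p.2 (r p.1).
have f_equiv i y h : f (i, y * h) = phi h (f (i, y)).
  by rewrite /f /= morphM ?inE // permM.
have f_inj : injective f.
  move=> [i g] [j g']; rewrite /f /= => e.
  have orb_r k h : orbit 'P H (r k) = orbit 'P H (phi h (r k)).
    by apply/esym/orbit_eqP/orbitP; exists (phi h); rewrite ?phiH.
  have ij : i = j by apply: r_inj; rewrite /= (orb_r i g) (orb_r j g') e.
  subst j; congr (_, _); apply: (injmP injphi); rewrite ?inE //.
  exact: free_action_eq e.
exists f; split=> //; apply: (@inj_card_bij _ _ f f_inj).
by rewrite card_prod !card_ord hn.
Qed.

End FreeAction.

Theorem mainTheorem1 (K : finFieldType) (gT : finGroupType) (l n : nat)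
  (hl : (1 <= l)%N) (hn : n = (l * #|gT|)%N) (C : {vspace 'rV[K]_n}) :
  quasi_G_code gT l C <->
  exists H : {group {perm 'I_n}},
    [/\ H \subset PAut C, ([set: gT] \isog H)%g,
        free_action H & num_orbits H = l].
Proof.
split.
- case=> f [[fi fK fiK] modC].
  have rtransC := (right_KG_submoduleE (rtransE fK fiK) (Bijective fK fiK) C).1 modC.
  exists (rtrans_morphism fK fiK @* [set: gT])%G; split.
  + by apply/subsetP => _ /morphimP [h _ _ ->]; apply: rtransC.
  + by apply/isogP; exists (rtrans_morphism fK fiK); first exact: injm_rtrans (Ordinal hl).
  + exact: rtrans_free.
  + exact: num_orbits_rtrans.
- case=> H [PAutH /isogP [phi injphi imphi] freeH nH].
  have [f [f_bij f_equiv]] := free_action_coordinates injphi imphi freeH nH hn.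
  exists f; split=> //; apply/(right_KG_submoduleE f_equiv f_bij) => h.
  by apply: (subsetP PAutH); rewrite -imphi mem_morphim ?inE.
Qed.
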